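(* Consider symmetric simultaneous two-player weighted congestion games with affine costs and proportional cost functions, with arbitrary player weights $w_1,w_2\ge0$ ($w_1+w_2>0$). The price of anarchy (supremum over all weights and instances, with respect to pure Nash equilibria) is approximately $1.6096$, both for congestion games and for network routing games, and it is attained for $w_1/w_2\approx 1.1940$ and for $w_2/w_1\approx 1.1940$.
   Context: A weighted two-player congestion game with affine costs consists of a finite set $R$ of resources, coefficients $\alpha_r,\beta_r \geq 0$ for each $r\in R$, two players $i=1,2$ with weights $w_i\ge 0$, and for each player $i$ a nonempty finite set $\mathcal{A}_i \subseteq 2^R$ of actions; it is symmetric if $\mathcal{A}_1=\mathcal{A}_2$. In a network routing game, $R$ is the arc set of a directed graph, player $i$ has a source $s_i$ and sink $t_i$, and $\mathcal{A}_i$ is the set of arc sets of directed $s_i$–$t_i$ paths (symmetric: common source and sink). For an action profile $A=(A_1,A_2)$ the load of $r$ is $x_r(A)=\sum_{j:\, r\in A_j} w_j$. With proportional costs, player $i$ pays $C_i(A)=w_i\sum_{r\in A_i}(\alpha_r+\beta_r x_r(A))$. The social cost is $C(A)=C_1(A)+C_2(A)$. A pure Nash equilibrium is a profile from which no player can lower her cost by unilaterally changing her action. The price of anarchy of an instance is the maximum over Nash equilibria $A$ of $C(A)/\min_{A'} C(A')$; the price of anarchy of a class is the supremum over all instances (with positive optimal social cost). *)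

From HB Require Import structures.
From mathcomp Require Import all_boot all_order all_algebra.
From mathcomp Require Import Rstruct.
Set Implicit Arguments. Unset Strict Implicit. Unset Printing Implicit Defensive.
Import Order.TTheory GRing.Theory Num.Theory.
Local Open Scope ring_scope.

Notation RR := Rdefinitions.R.

Definition load (m : nat) (w1 w2 : RR) (A1 A2 : {set 'I_m}) (r : 'I_m) : RR :=
  (if r \in A1 then w1 else 0) + (if r \in A2 then w2 else 0).

Definition cost1 (m : nat) (alpha beta : 'I_m -> RR) (w1 w2 : RR)
  (A1 A2 : {set 'I_m}) : RR :=
  w1 * \sum_(r in A1) (alpha r + beta r * load w1 w2 A1 A2 r).

Definition cost2 (m : nat) (alpha beta : 'I_m -> RR) (w1 w2 : RR)
  (A1 A2 : {set 'I_m}) : RR :=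
  w2 * \sum_(r in A2) (alpha r + beta r * load w1 w2 A1 A2 r).

Definition social_cost (m : nat) (alpha beta : 'I_m -> RR) (w1 w2 : RR)
  (A1 A2 : {set 'I_m}) : RR :=
  cost1 alpha beta w1 w2 A1 A2 + cost2 alpha beta w1 w2 A1 A2.

Definition is_NE (m : nat) (alpha beta : 'I_m -> RR) (w1 w2 : RR)
  (acts : {set 'I_m} -> Prop) (A1 A2 : {set 'I_m}) : Prop :=
  acts A1 /\ acts A2 /\
  (forall B, acts B -> cost1 alpha beta w1 w2 A1 A2 <= cost1 alpha beta w1 w2 B A2) /\
  (forall B, acts B -> cost2 alpha beta w1 w2 A1 A2 <= cost2 alpha beta w1 w2 A1 B).

Definition is_OPT (m : nat) (alpha beta : 'I_m -> RR) (w1 w2 : RR)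
  (acts : {set 'I_m} -> Prop) (A1 A2 : {set 'I_m}) : Prop :=
  acts A1 /\ acts A2 /\
  (forall B1 B2, acts B1 -> acts B2 ->
     social_cost alpha beta w1 w2 A1 A2 <= social_cost alpha beta w1 w2 B1 B2).

(* [walk_to tl hd v p t]: the arc sequence p is a directed walk from v to t
   in the digraph with arcs 'I_m, arc e going from tl e to hd e. *)
Fixpoint walk_to (n m : nat) (tl hd : 'I_m -> 'I_n) (v : 'I_n) (p : seq 'I_m)
  (t : 'I_n) : bool :=
  match p with
  | [::] => v == t
  | e :: p' => (tl e == v) && walk_to tl hd (hd e) p' t
  end.

Definition st_path_arcs (n m : nat) (tl hd : 'I_m -> 'I_n) (s t : 'I_n)
  (A : {set 'I_m}) : Prop :=
  exists p : seq 'I_m,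
    walk_to tl hd s p t /\ uniq (s :: map hd p) /\ A = [set e in p].

(* Set of values C(A)/C(O) with A a pure NE and O a social optimum with
   C(O) > 0, over all symmetric two-player weighted congestion games with
   affine costs whose weights satisfy the constraint [W]; its supremum is
   the price of anarchy of the class. *)
Definition poa_ratios_cg (W : RR -> RR -> Prop) (x : RR) : Prop :=
  exists (m : nat) (alpha beta : 'I_m -> RR) (w1 w2 : RR)
         (acts : {set 'I_m} -> Prop) (A1 A2 O1 O2 : {set 'I_m}),
    (forall r, 0 <= alpha r) /\ (forall r, 0 <= beta r) /\
    0 <= w1 /\ 0 <= w2 /\ 0 < w1 + w2 /\ W w1 w2 /\
    (exists A, acts A) /\
    is_NE alpha beta w1 w2 acts A1 A2 /\
    is_OPT alpha beta w1 w2 acts O1 O2 /\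
    0 < social_cost alpha beta w1 w2 O1 O2 /\
    x = social_cost alpha beta w1 w2 A1 A2 / social_cost alpha beta w1 w2 O1 O2.

Definition poa_ratios_net (W : RR -> RR -> Prop) (x : RR) : Prop :=
  exists (n m : nat) (tl hd : 'I_m -> 'I_n) (s t : 'I_n)
         (alpha beta : 'I_m -> RR) (w1 w2 : RR) (A1 A2 O1 O2 : {set 'I_m}),
    (forall r, 0 <= alpha r) /\ (forall r, 0 <= beta r) /\
    0 <= w1 /\ 0 <= w2 /\ 0 < w1 + w2 /\ W w1 w2 /\
    (exists A, st_path_arcs tl hd s t A) /\
    is_NE alpha beta w1 w2 (st_path_arcs tl hd s t) A1 A2 /\
    is_OPT alpha beta w1 w2 (st_path_arcs tl hd s t) O1 O2 /\
    0 < social_cost alpha beta w1 w2 O1 O2 /\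
    x = social_cost alpha beta w1 w2 A1 A2 / social_cost alpha beta w1 w2 O1 O2.

Definition is_sup (S : RR -> Prop) (x : RR) : Prop :=
  (forall y, S y -> y <= x) /\
  (forall z, (forall y, S y -> y <= z) -> x <= z).

Definition any_weights (w1 w2 : RR) : Prop := True.
Definition ratio12 (r : RR) (w1 w2 : RR) : Prop := 0 < w2 /\ w1 = r * w2.
Definition ratio21 (r : RR) (w1 w2 : RR) : Prop := 0 < w1 /\ w2 = r * w1.

(* For a Nash equilibrium A and any profile O, the social cost
   and the Nash inequalities "player i does not gain by switching to O_j" are
   sums over resources of terms that are affine in (alpha_r, beta_r) and
   depend on r only through its membership in A1, A2, O1, O2.  Hence
   C(A) <= rho C(O) follows as soon as some nonnegative combination of these
   four inequalities bounds C(A) - rho C(O) on every resource, i.e. for each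
   of the 16 membership patterns and (alpha_r, beta_r) in {(1,0), (0,1)}.
   Such multipliers depend only on the ratio of the weights, and are given in
   closed form on three ranges of it.  On the middle range the bound obtained
   is max_{w >= 0} N(w)/D(w) = N(r)/D(r) ~ 1.6096, with N := [poa_num],
   D := [poa_den] and r ~ 1.194 the critical point of N/D.  A six-node network with weights (r, 1) has an equilibrium of
   cost N(r) and a profile of cost D(r), which is optimal by the upper bound
   itself. *)
From HB Require Import structures.
From mathcomp Require Import all_boot all_order all_algebra.
From mathcomp Require Import Rstruct ring lra.
Import Order.TTheory GRing.Theory Num.Theory.
Local Open Scope ring_scope.
Set Implicit Arguments. Unset Strict Implicit.

Definition poa_num (w : RR) : RR := 2 * w ^+ 4 + 6 * w ^+ 3 + 8 * w ^+ 2 + 6 * w + 2.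
Definition poa_den (w : RR) : RR := 2 * w ^+ 4 + 3 * w ^+ 3 + 4 * w ^+ 2 + 4 * w + 2.

(* -(N' D - N D') / 2 for N := poa_num and D := poa_den. *)
Definition poa_crit (w : RR) : RR :=
  3 * w ^+ 6 + 8 * w ^+ 5 + 6 * w ^+ 4 - 6 * w ^+ 3 - 13 * w ^+ 2 - 8 * w - 2.

Lemma poa_crit_ivt a b : a <= b -> poa_crit a <= 0 <= poa_crit b ->
  exists2 r, a <= r <= b & poa_crit r = 0.
Proof.
pose p : {poly RR} :=
  3 *: 'X^6 + 8 *: 'X^5 + 6 *: 'X^4 - 6 *: 'X^3 - 13 *: 'X^2 - 8 *: 'X - 2%:P.
have pE x : p.[x] = poa_crit x.
  by rewrite !(hornerD, hornerN, hornerZ, hornerXn, hornerC, hornerX).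
move=> le_ab; rewrite -!pE => /(poly_ivt le_ab)[r r_ab /rootP].
by rewrite pE; exists r.
Qed.

Lemma poa_crit_root :
  exists2 r : RR, 11935%:R / 10000%:R <= r <= 11945%:R / 10000%:R & poa_crit r = 0.
Proof.
apply: poa_crit_ivt; first lra.
by apply/andP; split; rewrite /poa_crit; lra.
Qed.

Lemma poa_ratio_bounds r : 11935%:R / 10000%:R <= r <= 11945%:R / 10000%:R ->
  16095%:R / 10000%:R * poa_den r <= poa_num r <= 16097%:R / 10000%:R * poa_den r.
Proof.
move=> /andP[r_lo r_hi]; rewrite /poa_num /poa_den.
have [t /andP[t_lo t_hi] ->] : exists2 t, - (1 / 2000%:R) <= t <= 1 / 2000%:R
    & r = 597%:R / 500%:R + t.
  by exists (r - 597%:R / 500%:R); [apply/andP; split; lra | ring].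
pose e : RR := 1 / 2000%:R.
have e_ge0 : 0 <= e by rewrite /e; lra.
have t1 : `|t| <= e by rewrite ler_norml; apply/andP.
have t2 : t ^+ 2 <= e ^+ 2 by rewrite -real_normK ?num_real // lerXn2r ?nnegrE.
have t3 : `|t ^+ 3| <= e ^+ 3 by rewrite normrX lerXn2r ?nnegrE.
have t4 : t ^+ 4 <= e ^+ 4.
  by rewrite -[4%N]/(2 * 2)%N !exprM lerXn2r ?nnegrE ?sqr_ge0.
move: t3; rewrite ler_norml => /andP[t3_lo t3_hi].
rewrite /e in t2 t3_lo t3_hi t4.
by apply/andP; split; nra.
Qed.

Lemma poa_ratio_max r w : 119%:R / 100%:R <= r -> poa_crit r = 0 -> 0 <= w ->
  poa_num w * poa_den r <= poa_num r * poa_den w.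
Proof.
move=> r_ge crit_r w_ge0.
have [c0 c1] : 0 <= 6 * r ^+ 5 + 16 * r ^+ 4 + 12 * r ^+ 3 - 12 * r ^+ 2 - 20 * r - 8 /\
               0 <= 6 * r ^+ 4 + 16 * r ^+ 3 + 8 * r ^+ 2 - 6 * r - 6.
  have [t t_ge0 ->] : exists2 t, 0 <= t & r = 119%:R / 100%:R + t.
    by exists (r - 119%:R / 100%:R); [rewrite subr_ge0 | ring].
  have t_pow k : 0 <= t ^+ k by rewrite exprn_ge0.
  by have := t_pow 2; have := t_pow 3; have := t_pow 4; have := t_pow 5; split; lra.
have c2 : 0 <= 6 * r ^+ 3 + 8 * r ^+ 2 + 4 * r by nra.
have expand : poa_num r * poa_den w - poa_num w * poa_den r =
  (w - r) ^+ 2 * ((6 * r ^+ 5 + 16 * r ^+ 4 + 12 * r ^+ 3 - 12 * r ^+ 2 - 20 * r - 8)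
                  + (6 * r ^+ 4 + 16 * r ^+ 3 + 8 * r ^+ 2 - 6 * r - 6) * w
                  + (6 * r ^+ 3 + 8 * r ^+ 2 + 4 * r) * w ^+ 2)
  + 2 * (w - r) * poa_crit r.
  by rewrite /poa_num /poa_den /poa_crit; ring.
rewrite -subr_ge0 expand crit_r mulr0 addr0 mulr_ge0 ?sqr_ge0 //.
by apply: addr_ge0; [apply: addr_ge0 |]; rewrite // mulr_ge0 // exprn_ge0.
Qed.

Lemma ler_pdivr_range (R : numFieldType) (lo hi x y : R) :
  0 < y -> lo * y <= x <= hi * y -> lo <= x / y <= hi.
Proof. by move=> y_gt0; rewrite ler_pdivlMr // ler_pdivrMr. Qed.

Lemma poa_root_ratio r :
  11935%:R / 10000%:R <= r <= 11945%:R / 10000%:R -> poa_crit r = 0 ->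
  16095%:R / 10000%:R <= poa_num r / poa_den r <= 16097%:R / 10000%:R /\
  forall w, 0 <= w -> poa_num w <= poa_num r / poa_den r * poa_den w.
Proof.
move=> r_range crit_r; have /andP[r_lo _] := r_range.
have den_gt0 : 0 < poa_den r by rewrite /poa_den; nra.
split; first exact: ler_pdivr_range den_gt0 (poa_ratio_bounds r_range).
move=> w w_ge0; rewrite mulrAC ler_pdivlMr //.
by apply: poa_ratio_max => //; lra.
Qed.

Lemma sum_in_natr (R : pzSemiRingType) (I : finType) (A : {set I}) (F : I -> R) :
  \sum_(i in A) F i = \sum_i (i \in A)%:R * F i.
Proof.
by rewrite big_mkcond; apply: eq_bigr => i _; case: (i \in A); rewrite ?mul1r ?mul0r.
Qed.

Lemma sum_set_seq (V : nmodType) (I : finType) (p : seq I) (F : I -> V) :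
  uniq p -> \sum_(i in [set e in p]) F i = \sum_(i <- p) F i.
Proof. by move=> uniq_p; rewrite (big_uniq _ uniq_p); apply: eq_bigl => i; rewrite inE. Qed.

Definition resource_load (v1 v2 : RR) (b1 b2 : bool) : RR := b1%:R * v1 + b2%:R * v2.

Lemma loadE m w1 w2 (A1 A2 : {set 'I_m}) r :
  load w1 w2 A1 A2 r = resource_load w1 w2 (r \in A1) (r \in A2).
Proof.
by rewrite /load /resource_load; case: (r \in A1); case: (r \in A2); rewrite ?mul1r ?mul0r.
Qed.

Lemma load_swap m w1 w2 (A1 A2 : {set 'I_m}) r : load w2 w1 A2 A1 r = load w1 w2 A1 A2 r.
Proof. exact: addrC. Qed.

Section Costs.
Variables (m : nat) (alpha beta : 'I_m -> RR).

Definition unit_cost1 (w1 w2 : RR) (A1 A2 : {set 'I_m}) : RR :=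
  \sum_(r in A1) (alpha r + beta r * load w1 w2 A1 A2 r).
Definition unit_cost2 (w1 w2 : RR) (A1 A2 : {set 'I_m}) : RR :=
  \sum_(r in A2) (alpha r + beta r * load w1 w2 A1 A2 r).

Lemma social_costE (w1 w2 : RR) (A1 A2 : {set 'I_m}) :
  social_cost alpha beta w1 w2 A1 A2 =
  \sum_r load w1 w2 A1 A2 r * (alpha r + beta r * load w1 w2 A1 A2 r).
Proof.
rewrite /social_cost /cost1 /cost2 !sum_in_natr !mulr_sumr -big_split /=.
by apply: eq_bigr => r _; rewrite loadE /resource_load; ring.
Qed.

Lemma social_cost_ge0 (w1 w2 : RR) (A1 A2 : {set 'I_m}) :
  (forall r, 0 <= alpha r) -> (forall r, 0 <= beta r) -> 0 <= w1 -> 0 <= w2 ->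
  0 <= social_cost alpha beta w1 w2 A1 A2.
Proof.
move=> alpha_ge0 beta_ge0 w1_ge0 w2_ge0.
have load_ge0 r : 0 <= load w1 w2 A1 A2 r by rewrite /load addr_ge0 //; case: ifP.
rewrite social_costE; apply: sumr_ge0 => r _.
by rewrite mulr_ge0 ?load_ge0 // addr_ge0 // mulr_ge0 ?load_ge0.
Qed.

Lemma cost1_swap (w1 w2 : RR) (A1 A2 : {set 'I_m}) :
  cost1 alpha beta w2 w1 A2 A1 = cost2 alpha beta w1 w2 A1 A2.
Proof.
by rewrite /cost1 /cost2; congr (_ * _); apply: eq_bigr => r _; rewrite load_swap.
Qed.

Lemma cost2_swap (w1 w2 : RR) (A1 A2 : {set 'I_m}) :
  cost2 alpha beta w2 w1 A2 A1 = cost1 alpha beta w1 w2 A1 A2.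
Proof.
by rewrite /cost1 /cost2; congr (_ * _); apply: eq_bigr => r _; rewrite load_swap.
Qed.

Lemma social_cost_swap (w1 w2 : RR) (A1 A2 : {set 'I_m}) :
  social_cost alpha beta w2 w1 A2 A1 = social_cost alpha beta w1 w2 A1 A2.
Proof. by rewrite /social_cost (cost1_swap w1 w2) (cost2_swap w1 w2) addrC. Qed.

Lemma is_NE_swap (w1 w2 : RR) acts (A1 A2 : {set 'I_m}) :
  is_NE alpha beta w1 w2 acts A1 A2 -> is_NE alpha beta w2 w1 acts A2 A1.
Proof.
case=> acts_A1 [acts_A2 [NE1 NE2]]; do 2 split => //.
by split=> B acts_B; [rewrite !cost1_swap; apply: NE2 | rewrite !cost2_swap; apply: NE1].
Qed.

Lemma is_OPT_swap (w1 w2 : RR) acts (O1 O2 : {set 'I_m}) :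
  is_OPT alpha beta w1 w2 acts O1 O2 -> is_OPT alpha beta w2 w1 acts O2 O1.
Proof.
case=> acts_O1 [acts_O2 opt]; split => //; split => // B1 B2 acts_B1 acts_B2.
by rewrite (social_cost_swap w1 w2 O1 O2) (social_cost_swap w1 w2 B2 B1); apply: opt.
Qed.

Lemma NE_unit_cost1 (w1 w2 : RR) acts (A1 A2 B : {set 'I_m}) :
  is_NE alpha beta w1 w2 acts A1 A2 -> 0 < w1 -> acts B ->
  unit_cost1 w1 w2 A1 A2 <= unit_cost1 w1 w2 B A2.
Proof. by case=> _ [_ [NE1 _]] w1_gt0 /NE1; rewrite /cost1 ler_pM2l. Qed.

Lemma NE_unit_cost2 (w1 w2 : RR) acts (A1 A2 B : {set 'I_m}) :
  is_NE alpha beta w1 w2 acts A1 A2 -> 0 < w2 -> acts B ->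
  unit_cost2 w1 w2 A1 A2 <= unit_cost2 w1 w2 A1 B.
Proof. by case=> _ [_ [_ NE2]] w2_gt0 /NE2; rewrite /cost2 ler_pM2l. Qed.

(* A player of weight zero does not affect the loads, so the other player's
   best response is optimal. *)
Lemma NE_social_cost_zero_weight (w1 : RR) acts (A1 A2 O1 O2 : {set 'I_m}) :
  is_NE alpha beta w1 0 acts A1 A2 -> acts O1 ->
  social_cost alpha beta w1 0 A1 A2 <= social_cost alpha beta w1 0 O1 O2.
Proof.
case=> _ [_ [NE1 _]] /NE1; rewrite /social_cost /cost2 !mul0r !addr0.
suff -> : cost1 alpha beta w1 0 O1 A2 = cost1 alpha beta w1 0 O1 O2 by [].
by congr (_ * _); apply: eq_bigr => r _; rewrite !loadE /resource_load !mulr0.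
Qed.

End Costs.

(* The contribution of a resource with coefficients [alpha], [beta] and
   membership pattern [a1 a2 o1 o2] in A1, A2, O1, O2 to
   den * (C(A) - rho * C(O)) + sum_ij l_ij * (U_i(O_j) - U_i(A_i)),
   where U_i is the cost of player i per unit of weight (see
   [sum_resource_excess]). *)
Definition resource_excess (v1 v2 rho den l11 l12 l21 l22 alpha beta : RR)
    (a1 a2 o1 o2 : bool) : RR :=
  let lat b1 b2 := alpha + beta * resource_load v1 v2 b1 b2 in
  den * (resource_load v1 v2 a1 a2 * lat a1 a2
         - rho * (resource_load v1 v2 o1 o2 * lat o1 o2))
  + l11 * (o1%:R * lat o1 a2 - a1%:R * lat a1 a2)
  + l12 * (o2%:R * lat o2 a2 - a1%:R * lat a1 a2)
  + l21 * (o1%:R * lat a1 o1 - a2%:R * lat a1 a2)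
  + l22 * (o2%:R * lat a1 o2 - a2%:R * lat a1 a2).

Definition poa_certificate (v1 v2 rho : RR) : Prop :=
  exists den l11 l12 l21 l22,
    [/\ 0 < den, 0 <= l11, 0 <= l12, 0 <= l21 & 0 <= l22] /\
    forall a1 a2 o1 o2,
      resource_excess v1 v2 rho den l11 l12 l21 l22 1 0 a1 a2 o1 o2 <= 0 /\
      resource_excess v1 v2 rho den l11 l12 l21 l22 0 1 a1 a2 o1 o2 <= 0.

Lemma resource_excess_affine v1 v2 rho den l11 l12 l21 l22 alpha beta a1 a2 o1 o2 :
  resource_excess v1 v2 rho den l11 l12 l21 l22 alpha beta a1 a2 o1 o2 =
  alpha * resource_excess v1 v2 rho den l11 l12 l21 l22 1 0 a1 a2 o1 o2
  + beta * resource_excess v1 v2 rho den l11 l12 l21 l22 0 1 a1 a2 o1 o2.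
Proof. by rewrite /resource_excess /=; ring. Qed.

Section Certificate.
Variables (m : nat) (alpha beta : 'I_m -> RR) (w1 w2 : RR).
Hypotheses (alpha_ge0 : forall r, 0 <= alpha r) (beta_ge0 : forall r, 0 <= beta r).

Lemma sum_resource_excess rho den l11 l12 l21 l22 (A1 A2 O1 O2 : {set 'I_m}) :
  \sum_r resource_excess w1 w2 rho den l11 l12 l21 l22 (alpha r) (beta r)
           (r \in A1) (r \in A2) (r \in O1) (r \in O2) =
  den * (social_cost alpha beta w1 w2 A1 A2 - rho * social_cost alpha beta w1 w2 O1 O2)
  + l11 * (unit_cost1 alpha beta w1 w2 O1 A2 - unit_cost1 alpha beta w1 w2 A1 A2)
  + l12 * (unit_cost1 alpha beta w1 w2 O2 A2 - unit_cost1 alpha beta w1 w2 A1 A2)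
  + l21 * (unit_cost2 alpha beta w1 w2 A1 O1 - unit_cost2 alpha beta w1 w2 A1 A2)
  + l22 * (unit_cost2 alpha beta w1 w2 A1 O2 - unit_cost2 alpha beta w1 w2 A1 A2).
Proof.
rewrite !social_costE /unit_cost1 /unit_cost2 !sum_in_natr.
rewrite !mulr_sumr -!sumrB !mulr_sumr -!big_split /=.
by apply: eq_bigr => r _; rewrite /resource_excess /= !loadE.
Qed.

Lemma NE_social_cost_le_certificate rho acts (A1 A2 O1 O2 : {set 'I_m}) :
  0 < w1 -> 0 < w2 -> poa_certificate w1 w2 rho ->
  is_NE alpha beta w1 w2 acts A1 A2 -> acts O1 -> acts O2 ->
  social_cost alpha beta w1 w2 A1 A2 <= rho * social_cost alpha beta w1 w2 O1 O2.
Proof.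
move=> w1_gt0 w2_gt0 [den [l11 [l12 [l21 [l22 [[den_gt0 l11_ge0 l12_ge0 l21_ge0 l22_ge0]
  local]]]]]] NE acts_O1 acts_O2.
have dev1 B : acts B ->
    0 <= unit_cost1 alpha beta w1 w2 B A2 - unit_cost1 alpha beta w1 w2 A1 A2.
  by move=> acts_B; rewrite subr_ge0 (NE_unit_cost1 NE).
have dev2 B : acts B ->
    0 <= unit_cost2 alpha beta w1 w2 A1 B - unit_cost2 alpha beta w1 w2 A1 A2.
  by move=> acts_B; rewrite subr_ge0 (NE_unit_cost2 NE).
have : \sum_r resource_excess w1 w2 rho den l11 l12 l21 l22 (alpha r) (beta r)
           (r \in A1) (r \in A2) (r \in O1) (r \in O2) <= 0.
  apply: sumr_le0 => r _; rewrite resource_excess_affine.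
  have [lin quad] := local (r \in A1) (r \in A2) (r \in O1) (r \in O2).
  by have := mulr_ge0_le0 (alpha_ge0 r) lin; have := mulr_ge0_le0 (beta_ge0 r) quad; lra.
rewrite sum_resource_excess => total_le0.
have := mulr_ge0 l11_ge0 (dev1 _ acts_O1); have := mulr_ge0 l12_ge0 (dev1 _ acts_O2).
have := mulr_ge0 l21_ge0 (dev2 _ acts_O1); have := mulr_ge0 l22_ge0 (dev2 _ acts_O2).
move=> *; rewrite -subr_le0 -(pmulr_rle0 _ den_gt0); lra.
Qed.

End Certificate.

Lemma resource_excess_scale s v1 v2 rho den l11 l12 l21 l22 alpha beta a1 a2 o1 o2 :
  resource_excess (s * v1) (s * v2) rho den (s * l11) (s * l12) (s * l21) (s * l22)
    alpha beta a1 a2 o1 o2 =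
  s * resource_excess v1 v2 rho den l11 l12 l21 l22 alpha (s * beta) a1 a2 o1 o2.
Proof. by rewrite /resource_excess /resource_load /=; ring. Qed.

Lemma poa_certificate_scale s v1 v2 rho : 0 < s ->
  poa_certificate v1 v2 rho -> poa_certificate (s * v1) (s * v2) rho.
Proof.
move=> s_gt0 [den [l11 [l12 [l21 [l22 [[den_gt0 ? ? ? ?] local]]]]]].
exists den, (s * l11), (s * l12), (s * l21), (s * l22).
split; first by split; rewrite // mulr_ge0 // ltW.
move=> a1 a2 o1 o2; have [lin quad] := local a1 a2 o1 o2.
rewrite !resource_excess_scale !pmulr_rle0 // mulr0 mulr1; split => //.
by rewrite resource_excess_affine mul0r add0r pmulr_rle0.
Qed.

Lemma poa_certificate_mono v1 v2 rho rho' : 0 <= v1 -> 0 <= v2 -> rho <= rho' ->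
  poa_certificate v1 v2 rho -> poa_certificate v1 v2 rho'.
Proof.
move=> v1_ge0 v2_ge0 le_rho [den [l11 [l12 [l21 [l22 [[den_gt0 ? ? ? ?] local]]]]]].
exists den, l11, l12, l21, l22; split => // a1 a2 o1 o2.
set y := resource_load v1 v2 o1 o2.
have y_ge0 : 0 <= y by rewrite /y /resource_load addr_ge0 // mulr_ge0.
have shift alpha beta :
    resource_excess v1 v2 rho' den l11 l12 l21 l22 alpha beta a1 a2 o1 o2 =
    resource_excess v1 v2 rho den l11 l12 l21 l22 alpha beta a1 a2 o1 o2
    - den * (rho' - rho) * (y * (alpha + beta * y)).
  by rewrite /resource_excess /y /=; ring.
have gap_ge0 alpha beta : 0 <= alpha -> 0 <= beta ->
    0 <= den * (rho' - rho) * (y * (alpha + beta * y)).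
  move=> alpha_ge0 beta_ge0; apply: mulr_ge0.
    by apply: mulr_ge0; [exact: ltW | rewrite subr_ge0].
  by apply: mulr_ge0 => //; apply: addr_ge0 => //; apply: mulr_ge0.
have [lin quad] := local a1 a2 o1 o2; rewrite !shift.
by have := gap_ge0 1 0 ler01 (lexx 0); have := gap_ge0 0 1 (lexx 0) ler01; split; lra.
Qed.

(* Numerals stay below 5000 in the certificates: larger ones elaborate through
   [Nat.of_num_uint], which [/=] unfolds into terms that [nra] no longer reads
   as constants.  Note 3219/2000 = 1.6095. *)
Lemma poa_certificate_near w : 1 <= w <= 106%:R / 100%:R ->
  poa_certificate w 1 (3219%:R / 2000%:R).
Proof.
move=> /andP[w_ge1 w_le].
exists 1, (122%:R / 100%:R * w - 62%:R / 100%:R), (606%:R / 1000%:R),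
  (606%:R / 1000%:R * w), (826%:R / 1000%:R - 467%:R / 2000%:R * w).
split; first by split; lra.
have w_box : 0 <= (w - 1) * (106%:R / 100%:R - w) by nra.
by move=> [] [] [] []; rewrite /resource_excess /resource_load /=; split; nra.
Qed.

Lemma poa_certificate_mid w rho : 106%:R / 100%:R <= w <= 24%:R / 10%:R ->
  3219%:R / 2000%:R <= rho <= 161%:R / 100%:R -> poa_num w <= rho * poa_den w ->
  poa_certificate w 1 rho.
Proof.
move=> /andP[w_lo w_hi] /andP[rho_lo rho_hi]; rewrite /poa_num /poa_den => w_tight.
exists (w * (w + 1)),
  ((2 - 2 * rho) + (5 - 3 * rho) * w + (5 - 2 * rho) * w ^+ 2 + (2 - rho) * w ^+ 3),
  ((rho - 1) * (w + w ^+ 2)), ((rho - 1) * (w ^+ 2 + w ^+ 3)),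
  ((2 - rho) * w + (3 - rho) * w ^+ 2 + (1 - rho) * w ^+ 3).
have w_box : 0 <= (w - 106%:R / 100%:R) * (24%:R / 10%:R - w) by nra.
have w2 : 1 <= w ^+ 2 by nra.
have w3 : 1 <= w ^+ 3 by rewrite exprSr; nra.
have w4 : 1 <= w ^+ 4 by rewrite exprSr; nra.
split; first by split; nra.
by move=> [] [] [] []; rewrite /resource_excess /resource_load /=; split; nra.
Qed.

Lemma poa_certificate_far u : 0 < u <= 5%:R / 12%:R ->
  poa_certificate 1 u (3219%:R / 2000%:R).
Proof.
move=> /andP[u_gt0 u_le].
exists 1, (108%:R / 100%:R - 36%:R / 100%:R * u ^+ 2), (87%:R / 100%:R * u ^+ 2), (1 / 2),
  (41%:R / 100%:R * u).
have u_box : 0 <= u * (5%:R / 12%:R - u) by nra.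
have u2 : u ^+ 2 <= 1 by nra.
split; first by split; nra.
by move=> [] [] [] []; rewrite /resource_excess /resource_load /=; split; nra.
Qed.

Section UpperBound.
Variable rho : RR.
Hypothesis rho_range : 16095%:R / 10000%:R <= rho <= 16097%:R / 10000%:R.
Hypothesis poa_num_le : forall w, 0 <= w -> poa_num w <= rho * poa_den w.

Lemma poa_certificate_ordered w1 w2 : 0 < w2 <= w1 -> poa_certificate w1 w2 rho.
Proof.
move=> /andP[w2_gt0 w21]; have /andP[rho_lo rho_hi] := rho_range.
have [w w1E] : exists w, w1 = w2 * w by exists (w1 / w2); rewrite mulrC divfK ?gt_eqF.
rewrite w1E in w21 *; have w_ge1 : 1 <= w by nra.
have [w_near | w_mid] := lerP w (106%:R / 100%:R).
  rewrite -[X in poa_certificate _ X]mulr1; apply: poa_certificate_scale => //.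
  apply: (poa_certificate_mono (le_trans ler01 w_ge1) ler01 _ (poa_certificate_near _)).
    by lra.
  by rewrite w_ge1.
have [w_mid' | w_far] := lerP w (24%:R / 10%:R).
  rewrite -[X in poa_certificate _ X]mulr1; apply: poa_certificate_scale => //.
  by apply: poa_certificate_mid; rewrite ?poa_num_le //; lra.
have w_gt0 : 0 < w by lra.
have w_inv : w * w^-1 = 1 by rewrite mulfV // lt0r_neq0.
have inv_gt0 : 0 < w^-1 by rewrite invr_gt0.
rewrite -[X in poa_certificate _ X](mulfK (lt0r_neq0 w_gt0)).
rewrite -[X in poa_certificate X _]mulr1; apply: poa_certificate_scale; first exact: mulr_gt0.
apply: (poa_certificate_mono ler01 (ltW inv_gt0) _ (poa_certificate_far _)); first lra.
by rewrite inv_gt0 /=; nra.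
Qed.

Lemma NE_social_cost_le m (alpha beta : 'I_m -> RR) w1 w2 acts
    (A1 A2 O1 O2 : {set 'I_m}) :
  (forall r, 0 <= alpha r) -> (forall r, 0 <= beta r) ->
  0 <= w1 -> 0 <= w2 -> 0 < w1 + w2 ->
  is_NE alpha beta w1 w2 acts A1 A2 -> acts O1 -> acts O2 ->
  social_cost alpha beta w1 w2 A1 A2 <= rho * social_cost alpha beta w1 w2 O1 O2.
Proof.
move=> alpha_ge0 beta_ge0.
wlog w21 : w1 w2 A1 A2 O1 O2 / w2 <= w1.
  move=> ordered w1_ge0 w2_ge0 w_gt0 NE acts_O1 acts_O2.
  have [/ordered|w12] := lerP w2 w1; first exact.
  rewrite -(social_cost_swap _ _ w1 w2 A1) -(social_cost_swap _ _ w1 w2 O1).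
  apply: (ordered w2 w1 A2 A1 O2 O1 (ltW w12)) => //; first by rewrite addrC.
  exact: is_NE_swap.
move=> w1_ge0 w2_ge0 w_gt0 NE acts_O1 acts_O2.
have [w2_gt0 | w2_le0] := ltrP 0 w2.
  apply: NE_social_cost_le_certificate NE acts_O1 acts_O2 => //; first lra.
  by apply: poa_certificate_ordered; rewrite w2_gt0.
have w2_0 : w2 = 0 by lra.
rewrite w2_0 in NE *; apply: le_trans (NE_social_cost_zero_weight O2 NE acts_O1) _.
have /andP[rho_lo _] := rho_range.
by rewrite ler_peMl ?social_cost_ge0 //; lra.
Qed.

Lemma poa_ratios_cg_le W x : poa_ratios_cg W x -> x <= rho.
Proof.
case=> m [alpha [beta [w1 [w2 [acts [A1 [A2 [O1 [O2 [alpha_ge0 [beta_ge0 [w1_ge0 [w2_ge0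
  [w_gt0 [_ [_ [NE [[acts_O1 [acts_O2 _]] [C_gt0 ->]]]]]]]]]]]]]]]]]]].
rewrite ler_pdivrMr //.
exact: NE_social_cost_le alpha_ge0 beta_ge0 w1_ge0 w2_ge0 w_gt0 NE acts_O1 acts_O2.
Qed.

End UpperBound.

Lemma poa_ratios_net_cg W x : poa_ratios_net W x -> poa_ratios_cg W x.
Proof.
case=> n [m [tl [hd [s [t [alpha [beta [w1 [w2 [A1 [A2 [O1 [O2 H]]]]]]]]]]]]].
by exists m, alpha, beta, w1, w2, (st_path_arcs tl hd s t), A1, A2, O1, O2.
Qed.

Lemma poa_ratios_net_weaken (W W' : RR -> RR -> Prop) x :
  (forall w1 w2, W w1 w2 -> W' w1 w2) -> poa_ratios_net W x -> poa_ratios_net W' x.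
Proof.
move=> WW' [n [m [tl [hd [s [t [alpha [beta [w1 [w2 [A1 [A2 [O1 [O2
  [alpha_ge0 [beta_ge0 [w1_ge0 [w2_ge0 [w_gt0 [W_w H]]]]]]]]]]]]]]]]]]]].
exists n, m, tl, hd, s, t, alpha, beta, w1, w2, A1, A2, O1, O2.
by do 5 split => //; split; first exact: WW'.
Qed.

Lemma poa_ratios_net_ratio21 r x :
  poa_ratios_net (ratio12 r) x -> poa_ratios_net (ratio21 r) x.
Proof.
case=> n [m [tl [hd [s [t [alpha [beta [w1 [w2 [A1 [A2 [O1 [O2
  [alpha_ge0 [beta_ge0 [w1_ge0 [w2_ge0 [w_gt0 [W_w [paths [NE [OPT [C_gt0 ->]]]]]]]]]]
  ]]]]]]]]]]]]].
exists n, m, tl, hd, s, t, alpha, beta, w2, w1, A2, A1, O2, O1.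
rewrite !(social_cost_swap _ _ w1 w2); do 4 split => //; split; first by rewrite addrC.
by do 2 split => //; split; [apply: is_NE_swap | split; first apply: is_OPT_swap].
Qed.

Lemma is_sup_max (S : RR -> Prop) x : (forall y, S y -> y <= x) -> S x -> is_sup S x.
Proof. by move=> ub Sx; split => // z; apply. Qed.

Section Walks.
Variables (n m : nat) (tl hd : 'I_m -> 'I_n) (out : 'I_n -> seq 'I_m) (t : 'I_n).
Hypothesis out_tl : forall e, e \in out (tl e).

Fixpoint walks (k : nat) (v : 'I_n) : seq (seq 'I_m) :=
  (if v == t then [:: [::]] else [::]) ++
  if k is k'.+1 then flatten [seq map (cons e) (walks k' (hd e)) | e <- out v] else [::].

Lemma mem_walks k v p : walk_to tl hd v p t -> (size p <= k)%N -> p \in walks k v.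
Proof.
elim: p k v => [|e p IHp] [|k] v /=; rewrite ?mem_cat //.
- by move=> /eqP ->; rewrite eqxx mem_head.
- by move=> /eqP ->; rewrite eqxx mem_head.
case/andP=> /eqP tl_e walk_p size_p; apply/orP; right.
apply/flattenP; exists (map (cons e) (walks k (hd e))).
  by apply/mapP; exists e; rewrite -?tl_e.
exact/map_f/IHp.
Qed.

Lemma st_path_walks s (A : {set 'I_m}) : st_path_arcs tl hd s t A ->
  exists2 p, p \in walks n s & A = [set e in p].
Proof.
case=> p [walk_p [uniq_p ->]]; exists p => //; apply: mem_walks => //.
have := max_card (mem (s :: map hd p)).
by rewrite (card_uniqP uniq_p) card_ord /= size_map; apply: ltnW.
Qed.

End Walks.

Definition node (k : nat) (lt_k6 : (k < 6)%N) : 'I_6 := Ordinal lt_k6.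
Definition arc (k : nat) (lt_k8 : (k < 8)%N) : 'I_8 := Ordinal lt_k8.
Notation "'n[' k ']'" := (@node k isT).
Notation "'a[' k ']'" := (@arc k isT).

Definition lb_tail (e : 'I_8) : 'I_6 :=
  match val e with
  | 0 | 1 => n[0] | 2 | 7 => n[1] | 3 => n[2] | 4 | 5 => n[3] | _ => n[4] end.
Definition lb_head (e : 'I_8) : 'I_6 :=
  match val e with
  | 0 | 2 => n[2] | 1 => n[1] | 3 => n[3] | 4 | 7 => n[4] | _ => n[5] end.
Definition lb_out (v : 'I_6) : seq 'I_8 :=
  match val v with
  | 0 => [:: a[0]; a[1]] | 1 => [:: a[2]; a[7]] | 2 => [:: a[3]]
  | 3 => [:: a[4]; a[5]] | 4 => [:: a[6]] | _ => [::] end.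

Lemma lb_out_tail e : e \in lb_out (lb_tail e).
Proof. by case: e => [[|[|[|[|[|[|[|[|k]]]]]]]] lt_k8]. Qed.

Lemma lb_walks : walks lb_head lb_out n[5] 6 n[0] =
  [:: [:: a[0]; a[3]; a[4]; a[6]]; [:: a[0]; a[3]; a[5]];
      [:: a[1]; a[2]; a[3]; a[4]; a[6]]; [:: a[1]; a[2]; a[3]; a[5]];
      [:: a[1]; a[7]; a[6]]].
Proof. by []. Qed.

Definition lb_beta (r : RR) (e : 'I_8) : RR :=
  match val e with
  | 0 => r + 1 | 1 | 6 => (r + 1) ^+ 2 | 3 => r ^+ 2 + r + 1 | 5 => r * (r + 1)
  | _ => 0 end.

Definition lb_A1 : {set 'I_8} := [set e in [:: a[0]; a[3]; a[4]; a[6]]].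
Definition lb_O1 : {set 'I_8} := [set e in [:: a[0]; a[3]; a[5]]].
Definition lb_P : {set 'I_8} := [set e in [:: a[1]; a[2]; a[3]; a[4]; a[6]]].
Definition lb_A2 : {set 'I_8} := [set e in [:: a[1]; a[2]; a[3]; a[5]]].
Definition lb_O2 : {set 'I_8} := [set e in [:: a[1]; a[7]; a[6]]].

Notation lb_paths := (st_path_arcs lb_tail lb_head n[0] n[5]).

Lemma lb_pathsP B : lb_paths B ->
  [\/ B = lb_A1, B = lb_O1, B = lb_P | B = lb_A2 \/ B = lb_O2].
Proof.
case/(st_path_walks lb_out_tail)=> p + ->; rewrite lb_walks !inE.
by case/orP=> [|/orP[|/orP[|/orP[]]]] /eqP->;
  [apply: Or41 | apply: Or42 | apply: Or43 | apply/Or44/or_introl | apply/Or44/or_intror].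
Qed.

Lemma lb_beta_ge0 r : 0 <= r -> forall e, 0 <= lb_beta r e.
Proof. by move=> r_ge0 [[|[|[|[|[|[|[|[|k]]]]]]]] ?]; rewrite /lb_beta /=; nra. Qed.

Lemma lb_NE r : 0 <= r -> is_NE (fun=> 0) (lb_beta r) r 1 lb_paths lb_A1 lb_A2.
Proof.
move=> r_ge0; split; first by exists [:: a[0]; a[3]; a[4]; a[6]].
split; first by exists [:: a[1]; a[2]; a[3]; a[5]].
split=> B /lb_pathsP[| | |[]] ->.
all: rewrite /cost1 /cost2 !sum_set_seq //= !big_cons !big_nil /load /lb_beta /= !inE /=.
all: nra.
Qed.

Lemma lb_social_costs r :
  social_cost (fun=> 0) (lb_beta r) r 1 lb_A1 lb_A2 = poa_num r /\
  social_cost (fun=> 0) (lb_beta r) r 1 lb_O1 lb_O2 = poa_den r.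
Proof.
rewrite /social_cost /cost1 /cost2 !sum_set_seq //= !big_cons !big_nil.
by rewrite /load /lb_beta /= !inE /= /poa_num /poa_den; split; ring.
Qed.

Lemma lb_poa_ratio r :
  11935%:R / 10000%:R <= r <= 11945%:R / 10000%:R -> poa_crit r = 0 ->
  poa_ratios_net (ratio12 r) (poa_num r / poa_den r).
Proof.
move=> r_range crit_r; have [rho_range rho_max] := poa_root_ratio r_range crit_r.
have /andP[r_lo _] := r_range; have r_ge0 : 0 <= r by lra.
have [costA costO] := lb_social_costs r.
have den_gt0 : 0 < poa_den r by rewrite /poa_den; nra.
have num_gt0 : 0 < poa_num r by rewrite /poa_num; nra.
have r1_gt0 : 0 < r + 1 by lra.
have NE := lb_NE r_ge0.
exists 6, 8, lb_tail, lb_head, n[0], n[5], (fun=> 0), (lb_beta r), r, 1.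
exists lb_A1, lb_A2, lb_O1, lb_O2.
do 2 split => //; first exact: lb_beta_ge0.
do 3 (split; first lra); split; first by split; [lra | rewrite mulr1].
split; first by exists lb_A1; case: NE.
split=> //; split; last by rewrite costA costO; split.
split; first by exists [:: a[0]; a[3]; a[5]].
split; first by exists [:: a[1]; a[7]; a[6]].
move=> B1 B2 path_B1 path_B2.
have := NE_social_cost_le rho_range rho_max (fun=> lexx 0) (lb_beta_ge0 r_ge0) r_ge0 ler01
  r1_gt0 NE path_B1 path_B2.
by rewrite costA costO mulrAC ler_pdivlMr // ler_pM2l.
Qed.

Theorem corollary4 :
  exists rho : RR,
    16095%:R / 10000%:R <= rho <= 16097%:R / 10000%:R /\
    is_sup (poa_ratios_cg any_weights) rho /\
    is_sup (poa_ratios_net any_weights) rho /\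
    exists r : RR,
      11935%:R / 10000%:R <= r <= 11945%:R / 10000%:R /\
      is_sup (poa_ratios_cg (ratio12 r)) rho /\
      is_sup (poa_ratios_net (ratio12 r)) rho /\
      is_sup (poa_ratios_cg (ratio21 r)) rho /\
      is_sup (poa_ratios_net (ratio21 r)) rho.
Proof.
have [r r_range crit_r] := poa_crit_root.
have [rho_range rho_max] := poa_root_ratio r_range crit_r.
set rho := poa_num r / poa_den r in rho_range rho_max *.
have ub_cg := poa_ratios_cg_le rho_range rho_max.
have ub_net W x : poa_ratios_net W x -> x <= rho by move/poa_ratios_net_cg/ub_cg.
have net12 : poa_ratios_net (ratio12 r) rho := lb_poa_ratio r_range crit_r.
have net21 := poa_ratios_net_ratio21 net12.
have netany : poa_ratios_net any_weights rho by apply: poa_ratios_net_weaken net12.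
exists rho; split => //; split.
  exact: is_sup_max (ub_cg _) (poa_ratios_net_cg netany).
split; first exact: is_sup_max (ub_net _) netany.
exists r; split => //.
split; first exact: is_sup_max (ub_cg _) (poa_ratios_net_cg net12).
split; first exact: is_sup_max (ub_net _) net12.
split; first exact: is_sup_max (ub_cg _) (poa_ratios_net_cg net21).
exact: is_sup_max (ub_net _) net21.
Qed.
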